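(* Let $(M,d)$ be a complete geodesic space and $f:M\to\mathbb R$ a function. (1) If $f$ is geodesically $\beta$-expconcave for some $\beta>0$, then $f$ is geodesically convex. (2) If $f$ is geodesically $\alpha$-convex and $L$-Lipschitz for some $\alpha,L>0$, then $f$ is geodesically $\beta$-expconcave for every $0<\beta\le \alpha/L^2$.
   Context: A geodesic in a metric space $(M,d)$ is a path $\gamma:[0,1]\to M$ with $d(\gamma(s),\gamma(t))=|t-s|\,d(\gamma(0),\gamma(1))$ for all $s,t\in[0,1]$. $(M,d)$ is a geodesic space if any two points $x,y\in M$ are connected by a geodesic ($\gamma(0)=x,\gamma(1)=y$). For $\alpha\in\mathbb R$, $f:M\to\mathbb R$ is geodesically $\alpha$-convex if for every geodesic $\gamma:[0,1]\to M$ the function $t\in[0,1]\mapsto f(\gamma(t))-\frac{\alpha}{2}d^2(\gamma(0),\gamma(t))$ is convex; $f$ is geodesically convex if it is geodesically $0$-convex, and geodesically concave if $-f$ is geodesically convex. For $\beta>0$, $f$ is geodesically $\beta$-expconcave if $\exp(-\beta f)$ is geodesically concave. *)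

From Stdlib Require Import Reals.
Open Scope R_scope.

Record is_metric {M : Type} (d : M -> M -> R) : Prop := {
  d_nonneg : forall x y, 0 <= d x y;
  d_sep : forall x y, d x y = 0 <-> x = y;
  d_sym : forall x y, d x y = d y x;
  d_tri : forall x y z, d x z <= d x y + d y z }.

Definition complete_metric {M : Type} (d : M -> M -> R) : Prop :=
  forall u : nat -> M,
    (forall eps, 0 < eps -> exists N : nat, forall m n : nat,
        (N <= m)%nat -> (N <= n)%nat -> d (u m) (u n) < eps) ->
    exists x : M, forall eps, 0 < eps -> exists N : nat, forall n : nat,
        (N <= n)%nat -> d (u n) x < eps.

(* A geodesic: a path [0,1] -> M (represented by R -> M, only values on
   [0,1] matter) with d(g s, g t) = |t - s| d(g 0, g 1). *)
Definition geodesic {M : Type} (d : M -> M -> R) (g : R -> M) : Prop :=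
  forall s t, 0 <= s <= 1 -> 0 <= t <= 1 ->
    d (g s) (g t) = Rabs (t - s) * d (g 0) (g 1).

Definition geodesic_space {M : Type} (d : M -> M -> R) : Prop :=
  forall x y : M, exists g : R -> M, geodesic d g /\ g 0 = x /\ g 1 = y.

Definition convex_on_01 (h : R -> R) : Prop :=
  forall s t l, 0 <= s <= 1 -> 0 <= t <= 1 -> 0 <= l <= 1 ->
    h ((1 - l) * s + l * t) <= (1 - l) * h s + l * h t.

Definition geod_alpha_convex {M : Type} (d : M -> M -> R) (alpha : R)
    (f : M -> R) : Prop :=
  forall g : R -> M, geodesic d g ->
    convex_on_01 (fun t => f (g t) - alpha / 2 * (d (g 0) (g t)) ^ 2).

Definition geod_convex {M : Type} (d : M -> M -> R) (f : M -> R) : Prop :=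
  geod_alpha_convex d 0 f.

Definition geod_concave {M : Type} (d : M -> M -> R) (f : M -> R) : Prop :=
  geod_convex d (fun x => - f x).

Definition geod_expconcave {M : Type} (d : M -> M -> R) (beta : R)
    (f : M -> R) : Prop :=
  geod_concave d (fun x => exp (- beta * f x)).

Definition lipschitz {M : Type} (d : M -> M -> R) (L : R) (f : M -> R) : Prop :=
  forall x y, Rabs (f x - f y) <= L * d x y.

From Stdlib Require Import Reals Lra.
From Coquelicot Require Import Coquelicot.
Open Scope R_scope.

(* (1) exp is convex and increasing, so if exp(-beta f) is concave along a
       geodesic then exp(-beta f) dominates exp of the chord of -beta f;
       taking logarithms and dividing by -beta gives convexity of f.
   (2) Along a geodesic g with D = d(g 0, g 1), alpha-convexity at the
       midpoint gives f(g m) <= (f(g u) + f(g v))/2 - alpha ((v-u) D)^2 / 8,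
       and the Lipschitz bound controls |f(g v) - f(g u)| by L |v-u| D.
       With beta L^2 <= alpha, the elementary inequality
       cosh y <= exp (y^2/2) turns this into midpoint concavity of
       F t = exp(-beta f(g t)).  F (extended to R by clamping t to [0, 1])
       is Lipschitz, hence continuous, and a continuous midpoint-concave
       function is concave.
   Both parts concern one geodesic at a time. *)

Lemma exp_le_iff x y : exp x <= exp y <-> x <= y.
Proof.
  split.
  - intros Hxy. destruct (Rle_or_lt x y) as [Hle | Hlt]; [exact Hle |].
    apply exp_increasing in Hlt. lra.
  - intros [Hlt | ->]; [left; apply exp_increasing, Hlt | lra].
Qed.

Lemma exp_tangent_line m z : exp m * (1 + (z - m)) <= exp z.
Proof.
  replace (exp z) with (exp m * exp (z - m))
    by (rewrite <- exp_plus; f_equal; ring).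
  apply Rmult_le_compat_l; [left; apply exp_pos | apply exp_ineq1_le].
Qed.

(** Convexity of exp, from the tangent line at the convex combination. *)
Lemma exp_convex x y l : 0 <= l <= 1 ->
  exp ((1 - l) * x + l * y) <= (1 - l) * exp x + l * exp y.
Proof.
  intros Hl. set (m := (1 - l) * x + l * y).
  pose proof (exp_tangent_line m x) as Hx.
  pose proof (exp_tangent_line m y) as Hy.
  assert (Hm : (1 - l) * (exp m * (1 + (x - m))) + l * (exp m * (1 + (y - m)))
               = exp m) by (unfold m; ring).
  nra.
Qed.

Lemma nonincreasing_of_derivative (F F' : R -> R) a b : a < b ->
  (forall c, a <= c <= b -> derivable_pt_lim F c (F' c)) ->
  (forall c, a < c < b -> F' c <= 0) -> F b <= F a.
Proof.
  intros Hab HF HF'.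
  destruct (MVT_cor2 F F' a b Hab HF) as [c [Hmvt Hc]].
  specialize (HF' c Hc). nra.
Qed.

(** sinh y <= y cosh y for y >= 0: the difference has derivative
    -y sinh y <= 0 and vanishes at 0. *)
Lemma sinh_le_mul_cosh y : 0 <= y -> exp y - exp (- y) <= y * (exp y + exp (- y)).
Proof.
  intros [Hy | <-]; [| rewrite Ropp_0; lra].
  set (P := fun c => (exp c - exp (- c)) - c * (exp c + exp (- c))).
  assert (HP : P y <= P 0).
  { apply (nonincreasing_of_derivative P (fun c => - c * (exp c - exp (- c)))).
    - exact Hy.
    - intros c _. apply is_derive_Reals. unfold P. auto_derive; [easy | ring].
    - intros c Hc. assert (exp (- c) < exp c) by (apply exp_increasing; lra).
      nra. }
  unfold P in HP. rewrite Ropp_0 in HP. lra.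
Qed.

(** cosh y <= exp (y^2 / 2): the function cosh y * exp (-y^2/2) has
    derivative (sinh y - y cosh y) exp (-y^2/2) <= 0 on [0, oo), so it is
    bounded by its value 1 at 0; the case y < 0 follows by evenness. *)
Lemma cosh_le_exp_half_sq y : exp y + exp (- y) <= 2 * exp (y * y / 2).
Proof.
  assert (Hpos : forall z, 0 <= z -> exp z + exp (- z) <= 2 * exp (z * z / 2)).
  { intros z [Hz | <-]; [| rewrite Ropp_0, Rmult_0_l, Rdiv_0_l; lra].
    set (G := fun c => (exp c + exp (- c)) * exp (- (c * c / 2))).
    assert (HG : G z <= G 0).
    { apply (nonincreasing_of_derivative G
        (fun c => ((exp c - exp (- c)) - c * (exp c + exp (- c)))
                  * exp (- (c * c / 2)))).
      - exact Hz.
      - intros c _. apply is_derive_Reals. unfold G. auto_derive; [easy |]. unfold Rdiv. field.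
      - intros c Hc. pose proof (sinh_le_mul_cosh c ltac:(lra)).
        pose proof (exp_pos (- (c * c / 2))). nra. }
    unfold G in HG. rewrite Rmult_0_l, Rdiv_0_l, Ropp_0, exp_0, (exp_Ropp (z * z / 2)) in HG.
    set (E := exp (z * z / 2)) in *.
    assert (HE : 0 < E) by apply exp_pos.
    assert (exp z + exp (- z) = (exp z + exp (- z)) * / E * E) by (field; lra).
    nra. }
  destruct (Rle_or_lt 0 y) as [Hy | Hy]; [now apply Hpos |].
  pose proof (Hpos (- y) ltac:(lra)) as H.
  rewrite Ropp_involutive in H. replace (- y * - y) with (y * y) in H by ring. lra.
Qed.

Lemma exp_midpoint_bound a b x : x <= (a + b) / 2 - (b - a) ^ 2 / 8 ->
  exp (- a) + exp (- b) <= 2 * exp (- x).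
Proof.
  intros Hx. set (y := (b - a) / 2). set (c := - (a + b) / 2).
  assert (Ea : exp (- a) = exp c * exp y)
    by (rewrite <- exp_plus; f_equal; unfold c, y; field).
  assert (Eb : exp (- b) = exp c * exp (- y))
    by (rewrite <- exp_plus; f_equal; unfold c, y; field).
  assert (Hcy : exp c * exp (y * y / 2) <= exp (- x)).
  { rewrite <- exp_plus. apply exp_le_iff. unfold c, y. lra. }
  pose proof (cosh_le_exp_half_sq y). pose proof (exp_pos c).
  rewrite Ea, Eb. nra.
Qed.

Lemma exp_neg_midpoint_step alpha L beta Delta pa pb pm :
  0 <= beta -> beta * L ^ 2 <= alpha ->
  Rabs (pb - pa) <= L * Delta ->
  pm <= (pa + pb) / 2 - alpha * Delta ^ 2 / 8 ->
  exp (- beta * pa) + exp (- beta * pb) <= 2 * exp (- beta * pm).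
Proof.
  intros Hb HbL Hlip Hmid.
  assert (Hsq : (pb - pa) ^ 2 <= (L * Delta) ^ 2).
  { rewrite <- pow2_abs. apply pow_incr. split; [apply Rabs_pos | exact Hlip]. }
  assert (Hgap : (beta * pb - beta * pa) ^ 2 <= beta * alpha * Delta ^ 2).
  { replace ((beta * pb - beta * pa) ^ 2) with (beta ^ 2 * (pb - pa) ^ 2) by ring.
    rewrite Rpow_mult_distr in Hsq.
    assert (beta ^ 2 * (pb - pa) ^ 2 <= beta ^ 2 * (L ^ 2 * Delta ^ 2))
      by (apply Rmult_le_compat_l; [apply pow2_ge_0 | exact Hsq]).
    assert (beta * (beta * L ^ 2) * Delta ^ 2 <= beta * alpha * Delta ^ 2)
      by (apply Rmult_le_compat_r; [apply pow2_ge_0 | apply Rmult_le_compat_l; lra]).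
    nra. }
  assert (beta * pm <= beta * ((pa + pb) / 2 - alpha * Delta ^ 2 / 8))
    by (apply Rmult_le_compat_l; lra).
  rewrite !Ropp_mult_distr_l_reverse.
  apply exp_midpoint_bound. lra.
Qed.

Lemma lipschitz_continuity_pt (F : R -> R) K : 0 <= K ->
  (forall x y, Rabs (F x - F y) <= K * Rabs (x - y)) ->
  forall x, continuity_pt F x.
Proof.
  intros HK HF x eps Heps. exists (eps / (K + 1)). split.
  - apply Rdiv_lt_0_compat; lra.
  - intros z [_ Hz]. simpl in *. unfold R_dist in *.
    pose proof (HF z x). pose proof (Rabs_pos (z - x)).
    assert (K * Rabs (z - x) <= K * (eps / (K + 1)))
      by (apply Rmult_le_compat_l; lra).
    assert (K * (eps / (K + 1)) < eps).
    { apply Rmult_lt_reg_r with (K + 1); [lra |].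
      field_simplify; [nra | lra]. }
    lra.
Qed.

Section MidpointConcavity.

Variables (F : R -> R) (lo hi : R).
Hypothesis F_cont : forall x, lo <= x <= hi -> continuity_pt F x.
Hypothesis F_midpoint : forall u v, lo <= u <= hi -> lo <= v <= hi ->
  F u + F v <= 2 * F ((u + v) / 2).

(** F stays above each of its chords: F minus the chord attains a minimum at
    some x0 by continuity; reflecting the nearer endpoint through x0 and using
    midpoint concavity shows that this minimum is nonnegative. *)
Lemma midpoint_concave_above_chord s t : lo <= s -> s < t -> t <= hi ->
  forall x, s <= x <= t -> F s + (F t - F s) / (t - s) * (x - s) <= F x.
Proof.
  intros Hlo Hst Hhi.
  set (c := (F t - F s) / (t - s)).
  set (k := fun x => F x - (F s + c * (x - s))).
  assert (k_cont : forall x, s <= x <= t -> continuity_pt k x).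
  { intros x Hx. apply continuity_pt_minus; [apply F_cont; lra |].
    apply (lipschitz_continuity_pt _ (Rabs c)); [apply Rabs_pos |].
    intros u v. replace (F s + c * (u - s) - (F s + c * (v - s))) with (c * (u - v))
      by ring.
    rewrite Rabs_mult. lra. }
  destruct (continuity_ab_min k s t (Rlt_le _ _ Hst) k_cont) as [x0 [Hmin Hx0]].
  assert (k_mid : forall u, 0 <= u -> s <= x0 - u -> x0 + u <= t ->
            k (x0 - u) + k (x0 + u) <= 2 * k x0).
  { intros u Hu H1 H2. unfold k.
    pose proof (F_midpoint (x0 - u) (x0 + u) ltac:(lra) ltac:(lra)) as H.
    replace ((x0 - u + (x0 + u)) / 2) with x0 in H by field. lra. }
  assert (ks : k s = 0) by (unfold k; ring).
  assert (kt : k t = 0) by (unfold k, c; field; lra).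
  assert (k_min_nonneg : 0 <= k x0).
  { destruct (Rle_or_lt (x0 - s) (t - x0)) as [Hnear | Hnear].
    - pose proof (k_mid (x0 - s) ltac:(lra) ltac:(lra) ltac:(lra)) as Hsum.
      replace (x0 - (x0 - s)) with s in Hsum by ring.
      pose proof (Hmin (x0 + (x0 - s)) ltac:(lra)). lra.
    - pose proof (k_mid (t - x0) ltac:(lra) ltac:(lra) ltac:(lra)) as Hsum.
      replace (x0 + (t - x0)) with t in Hsum by ring.
      pose proof (Hmin (x0 - (t - x0)) ltac:(lra)). lra. }
  intros x Hx. pose proof (Hmin x Hx). unfold k in *. lra.
Qed.

Lemma midpoint_concave_concave s t l :
  lo <= s <= hi -> lo <= t <= hi -> 0 <= l <= 1 ->
  (1 - l) * F s + l * F t <= F ((1 - l) * s + l * t).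
Proof.
  intros Hs Ht Hl.
  destruct (Rtotal_order s t) as [Hst | [<- | Hts]].
  - pose proof (midpoint_concave_above_chord s t ltac:(lra) Hst ltac:(lra)
                  ((1 - l) * s + l * t) ltac:(nra)) as H.
    replace ((F t - F s) / (t - s) * ((1 - l) * s + l * t - s))
      with (l * (F t - F s)) in H by (field; lra).
    lra.
  - replace ((1 - l) * s + l * s) with s by ring. lra.
  - pose proof (midpoint_concave_above_chord t s ltac:(lra) Hts ltac:(lra)
                  ((1 - l) * s + l * t) ltac:(nra)) as H.
    replace ((F s - F t) / (s - t) * ((1 - l) * s + l * t - t))
      with ((1 - l) * (F s - F t)) in H by (field; lra).
    lra.
Qed.

End MidpointConcavity.

(** Projection of R onto [0, 1]; it lets a function on [0, 1] be extended
    to a continuous function on R. *)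
Definition clamp01 (x : R) : R := Rmax 0 (Rmin 1 x).

Lemma clamp01_id x : 0 <= x <= 1 -> clamp01 x = x.
Proof. intros. unfold clamp01, Rmax, Rmin. repeat destruct Rle_dec; lra. Qed.

Lemma clamp01_range x : 0 <= clamp01 x <= 1.
Proof. unfold clamp01, Rmax, Rmin. repeat destruct Rle_dec; lra. Qed.

Lemma clamp01_lipschitz x y : Rabs (clamp01 x - clamp01 y) <= Rabs (x - y).
Proof.
  unfold clamp01, Rmax, Rmin, Rabs.
  repeat destruct Rle_dec; repeat destruct Rcase_abs; lra.
Qed.

Lemma geod_convex_along {M : Type} (d : M -> M -> R) (f : M -> R) :
  geod_convex d f <-> forall g, geodesic d g -> convex_on_01 (fun t => f (g t)).
Proof.
  unfold geod_convex, geod_alpha_convex, convex_on_01.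
  split; intros H g Hg s t l Hs Ht Hl; specialize (H g Hg s t l Hs Ht Hl);
    rewrite ?Rdiv_0_l, ?Rmult_0_l, ?Rminus_0_r in *; exact H.
Qed.

Lemma geodesic_dist_from_start {M : Type} (d : M -> M -> R) g t :
  geodesic d g -> 0 <= t <= 1 -> d (g 0) (g t) = t * d (g 0) (g 1).
Proof.
  intros Hg Ht. rewrite (Hg 0 t) by lra. rewrite Rminus_0_r, Rabs_pos_eq; lra.
Qed.

Lemma alpha_convex_midpoint {M : Type} (d : M -> M -> R) alpha f g u v :
  geod_alpha_convex d alpha f -> geodesic d g -> 0 <= u <= 1 -> 0 <= v <= 1 ->
  f (g ((u + v) / 2)) <=
  (f (g u) + f (g v)) / 2 - alpha * (Rabs (v - u) * d (g 0) (g 1)) ^ 2 / 8.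
Proof.
  intros Hconv Hg Hu Hv.
  pose proof (Hconv g Hg u v (/ 2) Hu Hv ltac:(lra)) as H. cbv beta in H.
  replace ((1 - / 2) * u + / 2 * v) with ((u + v) / 2) in H by field.
  rewrite (geodesic_dist_from_start d g u), (geodesic_dist_from_start d g v),
    (geodesic_dist_from_start d g ((u + v) / 2)) in H by (auto; lra).
  rewrite Rpow_mult_distr, pow2_abs.
  set (D := d (g 0) (g 1)) in *.
  replace (alpha / 2 * ((u + v) / 2 * D) ^ 2) with
    (/ 2 * (alpha / 2 * (u * D) ^ 2) + / 2 * (alpha / 2 * (v * D) ^ 2)
     - alpha * ((v - u) ^ 2 * D ^ 2) / 8) in H by field.
  lra.
Qed.

Lemma clamped_geodesic_lipschitz {M : Type} (d : M -> M -> R) L f g :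
  is_metric d -> 0 <= L -> geodesic d g -> lipschitz d L f ->
  forall u v, Rabs (f (g (clamp01 u)) - f (g (clamp01 v)))
              <= L * d (g 0) (g 1) * Rabs (u - v).
Proof.
  intros Hd HL Hg Hlip u v.
  eapply Rle_trans; [apply Hlip |].
  rewrite (Hg (clamp01 u) (clamp01 v) (clamp01_range u) (clamp01_range v)).
  rewrite Rmult_assoc, (Rmult_comm (d (g 0) (g 1))), (Rabs_minus_sym u v).
  apply Rmult_le_compat_l; [exact HL |].
  apply Rmult_le_compat_r; [apply (d_nonneg d Hd) | apply clamp01_lipschitz].
Qed.

Lemma expconcave_convex {M : Type} (d : M -> M -> R) beta f :
  0 < beta -> geod_expconcave d beta f -> geod_convex d f.
Proof.
  unfold geod_expconcave, geod_concave. rewrite !geod_convex_along.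
  intros Hb Hexp g Hg s t l Hs Ht Hl.
  pose proof (Hexp g Hg s t l Hs Ht Hl) as H. cbv beta in *.
  pose proof (exp_convex (- beta * f (g s)) (- beta * f (g t)) l Hl) as Hc.
  assert (Hlog : (1 - l) * (- beta * f (g s)) + l * (- beta * f (g t))
                 <= - beta * f (g ((1 - l) * s + l * t)))
    by (apply exp_le_iff; lra).
  apply Rmult_le_reg_l with beta; lra.
Qed.

Lemma geodesic_midpoint_expconcave {M : Type} (d : M -> M -> R) alpha L beta f g u v :
  0 <= beta -> beta * L ^ 2 <= alpha ->
  geod_alpha_convex d alpha f -> lipschitz d L f -> geodesic d g ->
  0 <= u <= 1 -> 0 <= v <= 1 ->
  exp (- beta * f (g u)) + exp (- beta * f (g v))
  <= 2 * exp (- beta * f (g ((u + v) / 2))).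
Proof.
  intros Hb HbL Hconv Hlip Hg Hu Hv.
  apply (exp_neg_midpoint_step alpha L beta (Rabs (v - u) * d (g 0) (g 1))); auto.
  - eapply Rle_trans; [apply Hlip |].
    rewrite (Hg v u Hv Hu), Rabs_minus_sym. lra.
  - exact (alpha_convex_midpoint d alpha f g u v Hconv Hg Hu Hv).
Qed.

Lemma convex_lipschitz_expconcave {M : Type} (d : M -> M -> R) alpha L beta f :
  is_metric d -> 0 <= L -> 0 <= beta -> beta * L ^ 2 <= alpha ->
  geod_alpha_convex d alpha f -> lipschitz d L f -> geod_expconcave d beta f.
Proof.
  intros Hd HL Hb HbL Hconv Hlip.
  unfold geod_expconcave, geod_concave. apply geod_convex_along.
  intros g Hg s t l Hs Ht Hl. cbv beta.
  set (F := fun t => exp (- beta * f (g (clamp01 t)))).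
  assert (F_eq : forall t, 0 <= t <= 1 -> F t = exp (- beta * f (g t)))
    by (intros; unfold F; rewrite clamp01_id; auto).
  assert (F_cont : forall t, 0 <= t <= 1 -> continuity_pt F t).
  { intros t0 _. unfold F.
    apply (continuity_pt_comp (fun t => - beta * f (g (clamp01 t))) exp).
    - apply (lipschitz_continuity_pt _ (beta * (L * d (g 0) (g 1)))).
      + apply Rmult_le_pos; [exact Hb |].
        apply Rmult_le_pos; [exact HL | apply (d_nonneg d Hd)].
      + intros u v. rewrite <- Rmult_minus_distr_l, Rabs_mult,
          Rabs_Ropp, (Rabs_pos_eq beta Hb), Rmult_assoc.
        apply Rmult_le_compat_l; [exact Hb |].
        apply (clamped_geodesic_lipschitz d L f g Hd HL Hg Hlip).
    - apply derivable_continuous_pt, derivable_pt_exp. }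
  assert (F_mid : forall u v, 0 <= u <= 1 -> 0 <= v <= 1 ->
            F u + F v <= 2 * F ((u + v) / 2)).
  { intros u v Hu Hv. rewrite !F_eq by lra.
    exact (geodesic_midpoint_expconcave d alpha L beta f g u v Hb HbL Hconv Hlip Hg Hu Hv). }
  pose proof (midpoint_concave_concave F 0 1 F_cont F_mid s t l Hs Ht Hl) as H.
  assert (0 <= (1 - l) * s + l * t <= 1) by nra.
  rewrite !F_eq in H by assumption. lra.
Qed.

Theorem lemma1 (M : Type) (d : M -> M -> R)
  (Hmetric : is_metric d) (Hcomplete : complete_metric d)
  (Hgeod : geodesic_space d) (f : M -> R) :
  (forall beta, 0 < beta -> geod_expconcave d beta f -> geod_convex d f) /\
  (forall alpha L, 0 < alpha -> 0 < L ->
     geod_alpha_convex d alpha f -> lipschitz d L f ->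
     forall beta, 0 < beta -> beta <= alpha / L ^ 2 -> geod_expconcave d beta f).
Proof.
  split.
  - intros beta Hb. exact (expconcave_convex d beta f Hb).
  - intros alpha L Ha HL Hconv Hlip beta Hb HbL.
    assert (HbL2 : beta * L ^ 2 <= alpha).
    { assert (HL2 : 0 < L ^ 2) by (apply pow_lt; exact HL).
      apply (Rmult_le_compat_r (L ^ 2)) in HbL; [| lra].
      replace (alpha / L ^ 2 * L ^ 2) with alpha in HbL by (field; lra).
      exact HbL. }
    exact (convex_lipschitz_expconcave d alpha L beta f Hmetric ltac:(lra)
             ltac:(lra) HbL2 Hconv Hlip).
Qed.
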